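(* Let $\xi,\zeta$ be admissible families with $E[\operatorname{ess\,sup}_{\theta\in\mathcal T}(\xi(\theta))^-]<+\infty$, $E[\operatorname{ess\,sup}_{\theta\in\mathcal T}(\zeta(\theta))^+]<+\infty$ and $\xi(T)=\zeta(T)=0$ a.s., and let $J_n,J'_n$ ($n\in\mathbb N$) be defined by $J_0=J'_0=0$, $J_{n+1}(\theta)=\operatorname{ess\,sup}_{\tau\in\mathcal T_\theta}E[J'_n(\tau)+\xi(\tau)\mid\mathcal F_\theta]$, $J'_{n+1}(\theta)=\operatorname{ess\,sup}_{\sigma\in\mathcal T_\theta}E[J_n(\sigma)-\zeta(\sigma)\mid\mathcal F_\theta]$. Then the sequences $(J_n)_{n\in\mathbb N}$ and $(J'_n)_{n\in\mathbb N}$ are almost surely non-decreasing: for each $n$ and each $\theta\in\mathcal T$, $J_n(\theta)\le J_{n+1}(\theta)$ and $J'_n(\theta)\le J'_{n+1}(\theta)$ a.s.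
   Context: Filtered probability space $(\Omega,\mathcal F,(\mathcal F_t)_{0\le t\le T},P)$ satisfying the usual conditions, $\mathcal F=\mathcal F_T$, $\mathcal F_0$ trivial, $T\in(0,\infty)$. $\mathcal T$: stopping times valued in $[0,T]$; $\mathcal T_S=\{\theta\in\mathcal T:\theta\ge S\text{ a.s.}\}$. A family $\phi=(\phi(\theta),\theta\in\mathcal T)$ of $\overline{\mathbb R}$-valued random variables is admissible if each $\phi(\theta)$ is $\mathcal F_\theta$-measurable and $\phi(\theta)=\phi(\theta')$ a.s. on $\{\theta=\theta'\}$. *)

From HB Require Import structures.
From mathcomp Require Import all_boot all_order all_algebra.
From mathcomp Require Import all_classical all_reals all_analysis measurable_realfun.
Set Implicit Arguments. Unset Strict Implicit. Unset Printing Implicit Defensive.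
Import Order.TTheory GRing.Theory Num.Theory.
Local Open Scope classical_set_scope.
Local Open Scope ring_scope.
Local Open Scope ereal_scope.

(* F_t is represented as a family
   of sub-sigma-algebras Fil t of the measurable sets of Omega. *)
Definition filtration_usual {d} {Omega : measurableType d} {R : realType}
  (P : probability Omega R) (Tm : R) (Fil : R -> set (set Omega)) : Prop :=
  [/\ (0 < Tm)%R,
      (forall t, (0 <= t <= Tm)%R -> sigma_algebra setT (Fil t)),
      (forall s t, (0 <= s)%R -> (s <= t)%R -> (t <= Tm)%R -> Fil s `<=` Fil t) &
      Fil Tm = measurable] /\
  [/\ (* completeness: F_0 (hence every F_t, and F) contains all P-null sets *)
      (forall N, P.-negligible N -> Fil 0%R N),
      (* right-continuity *)
      (forall t, (0 <= t)%R -> (t < Tm)%R -> forall A,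
          (forall s, (t < s)%R -> (s <= Tm)%R -> Fil s A) -> Fil t A) &
      (forall A, Fil 0%R A -> P A = 0 \/ P A = 1)].

Definition stopping_time {Omega : Type} {R : realType} (Tm : R)
  (Fil : R -> set (set Omega)) (theta : Omega -> R) : Prop :=
  (forall x, 0 <= theta x <= Tm)%R /\
  (forall t, (0 <= t <= Tm)%R -> Fil t [set x | (theta x <= t)%R]).

Definition Fstop {Omega : Type} {R : realType} (Tm : R)
  (Fil : R -> set (set Omega)) (theta : Omega -> R) : set (set Omega) :=
  [set A | Fil Tm A /\ forall t, (0 <= t <= Tm)%R ->
      Fil t (A `&` [set x | (theta x <= t)%R])].

Definition stop_after {d} {Omega : measurableType d} {R : realType}
  (P : probability Omega R) (Tm : R) (Fil : R -> set (set Omega))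
  (S : Omega -> R) : set (Omega -> R) :=
  [set theta | stopping_time Tm Fil theta /\ {ae P, forall x, (S x <= theta x)%R}].

Definition meas_wrt {Omega : Type} {R : realType} (G : set (set Omega))
  (Y : Omega -> \bar R) : Prop :=
  forall B : set (\bar R), measurable B -> G (Y @^-1` B).

Definition admissible {d} {Omega : measurableType d} {R : realType}
  (P : probability Omega R) (Tm : R) (Fil : R -> set (set Omega))
  (phi : (Omega -> R) -> Omega -> \bar R) : Prop :=
  (forall theta, stopping_time Tm Fil theta -> meas_wrt (Fstop Tm Fil theta) (phi theta)) /\
  (forall theta theta', stopping_time Tm Fil theta -> stopping_time Tm Fil theta' ->
     {ae P, forall x, theta x = theta' x -> phi theta x = phi theta' x}).

(* Y is a version of the (generalized) conditional expectation E[X | G],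
   for X whose negative part is integrable: Y is G-measurable, has integrable
   negative part, and has the same integral as X on every set of G. *)
Definition cond_exp {d} {Omega : measurableType d} {R : realType}
  (P : probability Omega R) (G : set (set Omega)) (X Y : Omega -> \bar R) : Prop :=
  [/\ meas_wrt G Y,
      P.-integrable setT (Y^\-) &
      forall A, G A -> \int[P]_(x in A) Y x = \int[P]_(x in A) X x].

Definition ess_sup_fam {d} {Omega : measurableType d} {R : realType} {I : Type}
  (P : probability Omega R) (S : set I) (X : I -> Omega -> \bar R)
  (Y : Omega -> \bar R) : Prop :=
  [/\ measurable_fun setT Y,
      (forall i, S i -> {ae P, forall x, X i x <= Y x}) &
      (forall Z : Omega -> \bar R, measurable_fun setT Z ->
         (forall i, S i -> {ae P, forall x, X i x <= Z x}) ->
         {ae P, forall x, Y x <= Z x})].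

(* J_{n+1}(theta) = ess sup_{tau in T_theta} E[ Xfam tau | F_theta ] *)
Definition snell_step {d} {Omega : measurableType d} {R : realType}
  (P : probability Omega R) (Tm : R) (Fil : R -> set (set Omega))
  (Xfam : (Omega -> R) -> Omega -> \bar R) (theta : Omega -> R)
  (Y : Omega -> \bar R) : Prop :=
  exists C : (Omega -> R) -> Omega -> \bar R,
    (forall tau, stop_after P Tm Fil theta tau ->
       cond_exp P (Fstop Tm Fil theta) (Xfam tau) (C tau)) /\
    ess_sup_fam P (stop_after P Tm Fil theta) C Y.

From HB Require Import structures.
From mathcomp Require Import all_boot all_order all_algebra.
From mathcomp Require Import all_classical all_reals all_analysis measurable_realfun.
Import Order.TTheory GRing.Theory Num.Theory.
Local Open Scope classical_set_scope.
Local Open Scope ring_scope.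
Local Open Scope ereal_scope.
Set Implicit Arguments. Unset Strict Implicit.

(* J_0 = J'_0 = 0, and stopping at the horizon T, where the rewards vanish,
   gives J_0 <= J_1 and J'_0 <= J'_1.  The Snell step is monotone in its reward
   family: generalized conditional expectations are a.s. monotone (a G-set on
   which E[X1|G] exceeds a bounded E[X2|G] by some eps > 0 is null), and the
   essential supremum is the least a.s. upper bound.  Hence J'_n <= J'_{n+1}
   yields J_{n+1} <= J_{n+2}, symmetrically for J', and induction concludes. *)

Lemma ae_le_integral d (T : measurableType d) (R : realType)
  (mu : {measure set T -> \bar R}) (D : set T) (f g : T -> \bar R) :
  measurable D -> measurable_fun D f -> measurable_fun D g ->
  {ae mu, forall x, D x -> f x <= g x} ->
  \int[mu]_(x in D) f x <= \int[mu]_(x in D) g x.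
Proof.
move=> mD mf mg fg; rewrite (integralE _ _ f) (integralE _ _ g); apply: leeB.
- apply: ae_ge0_le_integral => //; [exact: measurable_funepos|exact: measurable_funepos|].
  apply: filterS fg => x fgx Dx; apply: (@funepos_le _ _ [set x]) (mem_set erefl).
  by move=> y /set_mem ->; exact: fgx.
- apply: ae_ge0_le_integral => //; [exact: measurable_funeneg|exact: measurable_funeneg|].
  apply: filterS fg => x fgx Dx; apply: (@funeneg_le _ _ [set x]) (mem_set erefl).
  by move=> y /set_mem ->; exact: fgx.
Qed.

Section sub_sigma_algebra.
Context d (Omega : measurableType d) (R : realType) (G : set (set Omega)).
Hypothesis sG : sigma_algebra setT G.

Local Notation mG := (g_sigma_algebraType G).

Lemma g_sigma_measurableE A : G A = @measurable _ mG A.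
Proof. by rewrite measurable_g_measurableTypeE. Qed.

Lemma meas_wrt_measurable_fun (Y : Omega -> \bar R) :
  meas_wrt G Y -> @measurable_fun _ _ mG _ setT Y.
Proof. by move=> mY _ B mB; rewrite setTI; apply: sub_sigma_algebra; exact: mY. Qed.

Lemma g_sigma_measurable_lee (f g : Omega -> \bar R) :
  @measurable_fun _ _ mG _ setT f -> @measurable_fun _ _ mG _ setT g ->
  G [set x | f x <= g x].
Proof.
by move=> mf mg; rewrite g_sigma_measurableE -(setTI [set x | _]); exact: measurable_lee.
Qed.

Lemma meas_wrt_cst (c : \bar R) : meas_wrt G (fun _ => c).
Proof.
case: sG => G0 GC _ B _; rewrite preimage_cst; case: ifP => // _.
by rewrite -(setD0 setT); exact: GC.
Qed.

End sub_sigma_algebra.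

Section cond_exp_monotone.
Context d (Omega : measurableType d) (R : realType) (P : probability Omega R).
Context (G : set (set Omega)).
Hypotheses (sG : sigma_algebra setT G) (GM : G `<=` measurable).

Lemma meas_wrtW (Y : Omega -> \bar R) : meas_wrt G Y -> measurable_fun setT Y.
Proof. by move=> mY _ B mB; rewrite setTI; apply: GM; exact: mY. Qed.

Lemma cond_exp_cst0 : cond_exp P G (cst 0) (cst 0).
Proof.
split=> //; first exact: meas_wrt_cst.
have -> : (@cst Omega (\bar R) 0)^\- = cst 0.
  by apply/funext => x; rewrite funenegE /= oppr0 maxxx.
exact: integrable0.
Qed.

Variables (X1 X2 Y1 Y2 : Omega -> \bar R).
Hypotheses (mX1 : measurable_fun setT X1) (mX2 : measurable_fun setT X2).
Hypothesis X12 : {ae P, forall x, X1 x <= X2 x}.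
Hypotheses (EX1 : cond_exp P G X1 Y1) (EX2 : cond_exp P G X2 Y2).

(* The bound on [Y2] makes its integral over [E] finite, so that it can be
   cancelled from [int_E Y2 + eps P(E) <= int_E Y1 <= int_E Y2]. *)
Lemma cond_exp_gap_null (E : set Omega) (c eps : R) : G E -> (0 < eps)%R ->
  (forall x, E x -> `|Y2 x| <= c%:E) -> (forall x, E x -> Y2 x + eps%:E <= Y1 x) ->
  P E = 0.
Proof.
move=> GE eps0 Y2c gap; case: EX1 EX2 => [mY1 _ intY1] [mY2 _ intY2].
have mE := GM GE.
have mY1E : measurable_fun E Y1 := measurable_funS measurableT (subsetT _) (meas_wrtW mY1).
have mY2E : measurable_fun E Y2 := measurable_funS measurableT (subsetT _) (meas_wrtW mY2).
have intY2E : P.-integrable E Y2.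
  apply/integrableP; split=> //.
  apply: (@le_lt_trans _ _ (\int[P]_(x in E) cst c%:E x)).
    by apply: ge0_le_integral => //; exact: measurableT_comp.
  by rewrite integral_cst // ltey_eq fin_numM // fin_num_measure.
have Y12 : \int[P]_(x in E) Y1 x <= \int[P]_(x in E) Y2 x.
  rewrite intY1 // intY2 //; apply: ae_le_integral => //.
  - exact: measurable_funS mX1.
  - exact: measurable_funS mX2.
  - by apply: filterS X12.
have Y21 : \int[P]_(x in E) (Y2 x + eps%:E) <= \int[P]_(x in E) Y1 x.
  by apply: ae_le_integral => //; [exact: emeasurable_funD|exact: aeW].
rewrite integralD // ?finite_measure_integrable_cst // integral_cst // in Y21.
have := le_trans Y21 Y12.
rewrite -[leRHS]adde0 leeD2lE ?(integrable_fin_num mE intY2E) //.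
by rewrite pmule_rle0 ?lte_fin // => PE0; apply/eqP; rewrite -measure_le0.
Qed.

Lemma cond_exp_le : {ae P, forall x, Y1 x <= Y2 x}.
Proof.
case: (EX1) (EX2) => [mY1 _ _] [mY2 intY2 _].
pose E (k : nat) := [set x | `|Y2 x| <= k%:R%:E] `&`
                    [set x | Y2 x + (k.+1%:R^-1)%:E <= Y1 x].
have GE k : G (E k).
  have gY1 := meas_wrt_measurable_fun mY1; have gY2 := meas_wrt_measurable_fun mY2.
  rewrite /E (g_sigma_measurableE sG); apply: measurableI;
    rewrite -(g_sigma_measurableE sG); apply: g_sigma_measurable_lee => //.
  - exact: measurableT_comp.
  - exact: emeasurable_funD gY2 (measurable_cst _).
have nullE : P.-negligible (\bigcup_k E k).
  apply: negligible_bigcup => k; exists (E k); split=> //; first exact: GM.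
  by apply: (cond_exp_gap_null (c := k%:R) (eps := k.+1%:R^-1) (GE k)) => [|x []|x []].
have finY2 : {ae P, forall x, Y2^\- x \is a fin_num}.
  by apply: filterS (integrable_ae measurableT intY2) => x; apply.
apply: filterS2 finY2 (negligibleS (fun x => @contrapT _) nullE) => x finx notE.
rewrite leNgt; apply/negP => Y21; apply: notE.
move: finx Y21; rewrite funenegE; case eY2: (Y2 x) => [y||] //= _; last by rewrite ltNge leey.
move=> Y21.
have [k2 gapk2] : exists k2 : nat, y%:E + (k2.+1%:R^-1)%:E <= Y1 x.
  move: Y21; case: (Y1 x) => [z||] //=; last by exists 0%N; rewrite leey.
  by rewrite lte_fin => /ltr_add_invr [k ?]; exists k; rewrite -EFinD lee_fin ltW.
have [k1 yk1] : exists k1 : nat, (`|y| < k1%:R)%R.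
  by eexists; apply: archi_boundP; exact: normr_ge0.
exists (maxn k1 k2) => //; rewrite /E /= eY2; split.
  by rewrite lee_fin (le_trans (ltW yk1)) // ler_nat leq_maxl.
apply: le_trans gapk2; rewrite leeD2l // lee_fin lef_pV2 ?posrE //.
by rewrite ler_nat ltnS leq_maxr.
Qed.

End cond_exp_monotone.

Section snell_step_monotone.
Context d (Omega : measurableType d) (R : realType) (P : probability Omega R).
Context (Tm : R) (Fil : R -> set (set Omega)).
Hypothesis hF : filtration_usual P Tm Fil.

Lemma Fstop_sigma_algebra theta : stopping_time Tm Fil theta ->
  sigma_algebra setT (Fstop Tm Fil theta).
Proof.
case: hF => [[Tm0 sFil _ _] _] [_ theta_stop].
have sFilT : sigma_algebra setT (Fil Tm) by apply: sFil; rewrite lexx ltW.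
have FilE t A : (0 <= t <= Tm)%R ->
    Fil t A = @measurable _ (g_sigma_algebraType (Fil t)) A.
  by move=> t0T; exact: (g_sigma_measurableE (sFil t t0T)).
split.
- split; first by case: sFilT.
  by move=> t t0T; rewrite set0I; case: (sFil t t0T).
- move=> A [FA FtA]; split; first by case: sFilT => _ + _; exact.
  move=> t t0T; rewrite FilE //.
  have -> : (setT `\` A) `&` [set x | (theta x <= t)%R] =
      [set x | (theta x <= t)%R] `\` (A `&` [set x | (theta x <= t)%R]).
    by apply/seteqP; split => x /=; tauto.
  by apply: measurableD; rewrite -FilE //; [exact: theta_stop|exact: FtA].
- move=> A FA; split; first by case: sFilT => _ _; apply => n; case: (FA n).
  move=> t t0T; rewrite setI_bigcupl FilE //.
  by apply: bigcupT_measurable => n; rewrite -FilE //; case: (FA n) => _; exact.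
Qed.

Lemma Fstop_measurable theta : Fstop Tm Fil theta `<=` measurable.
Proof. by case: hF => [[_ _ _ FTm] _] A [+ _]; rewrite FTm. Qed.

Lemma stopping_time_horizon : stopping_time Tm Fil (fun _ => Tm).
Proof.
case: hF => [[Tm0 sFil _ _] _]; split => [x|t t0T]; first by rewrite lexx ltW.
have [F0 FC _] := sFil t t0T.
have [TMt|tTM] := boolP (Tm <= t)%R.
  rewrite (_ : [set _ | _] = setT); last by apply/seteqP; split.
  by rewrite -(setD0 setT); exact: FC.
by rewrite (_ : [set _ | _] = set0) //; apply/seteqP; split => x //=; rewrite (negbTE tTM).
Qed.

Lemma stop_after_horizon theta : stopping_time Tm Fil theta ->
  stop_after P Tm Fil theta (fun _ => Tm).
Proof.
move=> [theta_bound _]; split; first exact: stopping_time_horizon.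
by apply: aeW => x; case/andP: (theta_bound x).
Qed.

Lemma snell_step_measurable X theta Y :
  snell_step P Tm Fil X theta Y -> measurable_fun setT Y.
Proof. by case=> C [_ []]. Qed.

Lemma snell_step_le (X1 X2 : (Omega -> R) -> Omega -> \bar R) theta Y1 Y2 :
  stopping_time Tm Fil theta ->
  (forall tau, stop_after P Tm Fil theta tau -> measurable_fun setT (X1 tau)) ->
  (forall tau, stop_after P Tm Fil theta tau -> measurable_fun setT (X2 tau)) ->
  (forall tau, stop_after P Tm Fil theta tau -> {ae P, forall x, X1 tau x <= X2 tau x}) ->
  snell_step P Tm Fil X1 theta Y1 -> snell_step P Tm Fil X2 theta Y2 ->
  {ae P, forall x, Y1 x <= Y2 x}.
Proof.
move=> theta_stop mX1 mX2 X12 [C1 [EC1 [_ _ Y1_least]]] [C2 [EC2 [mY2 Y2_ub _]]].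
apply: Y1_least => // tau tau_after.
have C12 := cond_exp_le (Fstop_sigma_algebra theta_stop) (Fstop_measurable (theta:=theta))
  (mX1 _ tau_after) (mX2 _ tau_after) (X12 _ tau_after) (EC1 _ tau_after) (EC2 _ tau_after).
by apply: filterS2 C12 (Y2_ub _ tau_after) => x; exact: le_trans.
Qed.

Lemma snell_step_ge0 (X : (Omega -> R) -> Omega -> \bar R) theta Y :
  stopping_time Tm Fil theta -> measurable_fun setT (X (fun _ => Tm)) ->
  {ae P, forall x, 0 <= X (fun _ => Tm) x} ->
  snell_step P Tm Fil X theta Y -> {ae P, forall x, 0 <= Y x}.
Proof.
move=> theta_stop mXT XT0 [C [EC [_ Y_ub _]]].
have T_after := stop_after_horizon theta_stop.
have sF := Fstop_sigma_algebra theta_stop.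
have CT0 := cond_exp_le sF (Fstop_measurable (theta:=theta)) (measurable_cst _) mXT XT0
  (cond_exp_cst0 P sF) (EC _ T_after).
by apply: filterS2 CT0 (Y_ub _ T_after) => x; exact: le_trans.
Qed.

End snell_step_monotone.

Theorem lemma2p2 (d : measure_display) (Omega : measurableType d) (R : realType)
  (P : probability Omega R) (Tm : R) (Fil : R -> set (set Omega))
  (xi zeta : (Omega -> R) -> Omega -> \bar R)
  (J J' : nat -> (Omega -> R) -> Omega -> \bar R) :
  filtration_usual P Tm Fil ->
  admissible P Tm Fil xi -> admissible P Tm Fil zeta ->
  (exists Y, ess_sup_fam P (stopping_time Tm Fil) (fun th => (xi th)^\-) Y /\
             \int[P]_x Y x < +oo) ->
  (exists Y, ess_sup_fam P (stopping_time Tm Fil) (fun th => (zeta th)^\+) Y /\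
             \int[P]_x Y x < +oo) ->
  {ae P, forall x, xi (fun _ => Tm) x = 0} ->
  {ae P, forall x, zeta (fun _ => Tm) x = 0} ->
  (forall theta, J 0%N theta = cst 0) ->
  (forall theta, J' 0%N theta = cst 0) ->
  (forall n theta, stopping_time Tm Fil theta ->
     snell_step P Tm Fil (fun tau x => J' n tau x + xi tau x) theta (J n.+1 theta)) ->
  (forall n theta, stopping_time Tm Fil theta ->
     snell_step P Tm Fil (fun sigma x => J n sigma x - zeta sigma x) theta (J' n.+1 theta)) ->
  forall n theta, stopping_time Tm Fil theta ->
    {ae P, forall x, J n theta x <= J n.+1 theta x} /\
    {ae P, forall x, J' n theta x <= J' n.+1 theta x}.
Proof.
move=> hF [xi_meas _] [zeta_meas _] _ _ xiT0 zetaT0 J0 J'0 J_step J'_step.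
have m_xi tau : stopping_time Tm Fil tau -> measurable_fun setT (xi tau).
  by move=> tau_stop; apply: (meas_wrtW (Fstop_measurable hF (theta:=tau))); exact: xi_meas.
have m_zeta tau : stopping_time Tm Fil tau -> measurable_fun setT (zeta tau).
  by move=> tau_stop; apply: (meas_wrtW (Fstop_measurable hF (theta:=tau))); exact: zeta_meas.
have m_J n tau : stopping_time Tm Fil tau ->
    measurable_fun setT (J n tau) /\ measurable_fun setT (J' n tau).
  case: n => [|n] tau_stop; first by rewrite J0 J'0; split; exact: measurable_cst.
  by split; apply: snell_step_measurable; [exact: J_step|exact: J'_step].
have T_stop := stopping_time_horizon hF.
elim=> [|n IH] theta theta_stop; split.
- rewrite J0; apply: (snell_step_ge0 hF theta_stop _ _ (J_step 0%N _ theta_stop)).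
    exact: emeasurable_funD (m_J 0%N _ T_stop).2 (m_xi _ T_stop).
  by apply: filterS xiT0 => x ->; rewrite J'0 adde0.
- rewrite J'0; apply: (snell_step_ge0 hF theta_stop _ _ (J'_step 0%N _ theta_stop)).
    exact: emeasurable_funB (m_J 0%N _ T_stop).1 (m_zeta _ T_stop).
  by apply: filterS zetaT0 => x ->; rewrite J0 oppe0 adde0.
- apply: (snell_step_le hF theta_stop _ _ _ (J_step n _ theta_stop) (J_step n.+1 _ theta_stop)).
  + by move=> tau [tau_stop _]; exact: emeasurable_funD (m_J n _ tau_stop).2 (m_xi _ tau_stop).
  + by move=> tau [tau_stop _]; exact: emeasurable_funD (m_J n.+1 _ tau_stop).2 (m_xi _ tau_stop).
  + by move=> tau [tau_stop _]; apply: filterS (IH tau tau_stop).2 => x; exact: leeD2r.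
- apply: (snell_step_le hF theta_stop _ _ _ (J'_step n _ theta_stop) (J'_step n.+1 _ theta_stop)).
  + by move=> tau [tau_stop _]; exact: emeasurable_funB (m_J n _ tau_stop).1 (m_zeta _ tau_stop).
  + by move=> tau [tau_stop _]; exact: emeasurable_funB (m_J n.+1 _ tau_stop).1 (m_zeta _ tau_stop).
  + by move=> tau [tau_stop _]; apply: filterS (IH tau tau_stop).1 => x; exact: leeD2r.
Qed.
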